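(* Let $m\in\mathbb{N}$, $\alpha\in[0,1]$, and let $V$ be a 1-periodic complex-valued distribution with $V\in H_{+}^{-m\alpha}$. Let $S_{\pm}(V)=D_{\pm}^{2m}\dotplus V(x)$ be the form-sum operators on $L_2(0,1)$, i.e. the $m$-sectorial operators associated with the closed sectorial forms $t_\pm[u,v]=\langle D_{\pm}^{2m}u,v\rangle_{\pm}+\langle V(x)u,v\rangle_{\pm}$, $\mathrm{Dom}(t_\pm)=H_\pm^m$; equivalently $\mathrm{Dom}(S_{\pm})=\{u\in H_{\pm}^{m}\mid D_{\pm}^{2m}u+V(x)u\in L_{2}(0,1)\}$, $S_\pm(V)u=D_{\pm}^{2m}u+V(x)u$. Then $$\mathrm{Dom}(S_{\pm})\subseteq H_{\pm}^{m(2-\alpha)}.$$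
   Context: For $s\in\mathbb{R}$, $H_{+}^{s}$ is the space of formal series $f=\sum_{k\in\mathbb{Z}}\widehat f(2k)e^{i2k\pi x}$ with $\|f\|_{H_+^s}^2=\sum_k\langle 2k\rangle^{2s}|\widehat f(2k)|^2<\infty$, and $H_{-}^{s}$ is the space of formal series $f=\sum_{k}\widehat f(2k+1)e^{i(2k+1)\pi x}$ with $\|f\|_{H_-^s}^2=\sum_k\langle 2k+1\rangle^{2s}|\widehat f(2k+1)|^2<\infty$, where $\langle k\rangle=1+|k|$; $H_\pm^0=L_2(0,1)$. $\langle\cdot,\cdot\rangle_{\pm}$ is the pairing between $H_\pm^{s}$ and $H_\pm^{-s}$ extending the $L_2(0,1)$ inner product. $D_{\pm}=-i\,d/dx$ on $H_\pm^1$ and $D_\pm^{2m}=|D_\pm|^{2m}$ (multiplication by $(n\pi)^{2m}$ on the Fourier mode $e^{in\pi x}$), extended to all $H^s_\pm$. For $V\in H_+^{-m}$ and $u\in H_\pm^{m}$, $V(x)u=\sum_n\big(\sum_j\widehat V(n-j)\widehat u(j)\big)e^{in\pi x}\in H_\pm^{-m}$ is the formal product of Fourier series. Note $H_+^{-m\alpha}\subseteq H_+^{-m}$, so the operators are well defined. *)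

From Stdlib Require Import Reals ZArith.
From Coquelicot Require Import Coquelicot.
Open Scope R_scope.

(* A formal Fourier series sum_n f(n) e^{i n pi x}, n in Z, stored by its
   coefficient function. *)
Definition fseries := Z -> C.

(* Parity constraint: p = true  (the "+" case) : only even modes 2k,
                      p = false (the "-" case) : only odd modes 2k+1. *)
Definition parity_ok (p : bool) (f : fseries) : Prop :=
  forall n : Z, Z.even n <> p -> f n = RtoC 0.

Definition jb (n : Z) : R := 1 + Rabs (IZR n).

(* finiteness of sum_{n in Z} a n, for a nonnegative family a over Z
   (split Z into n >= 0 and n = -k-1 < 0). *)
Definition sumZ_finite (a : Z -> R) : Prop :=
  ex_series (fun k : nat => a (Z.of_nat k) + a (- Z.of_nat k - 1)%Z).

Definition H (p : bool) (s : R) (f : fseries) : Prop :=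
  parity_ok p f /\
  sumZ_finite (fun n => Rpower (jb n) (2 * s) * (Cmod (f n)) ^ 2).

(* c is the n-th Fourier coefficient of the formal product V(x)u,
   i.e. c = sum_{j in Z} V(n-j) u(j)  (j = k and j = -k-1, k in nat). *)
Definition prod_coef (V u : fseries) (n : Z) (c : C) : Prop :=
  is_series (fun k : nat =>
     Cplus (Cmult (V (n - Z.of_nat k)%Z) (u (Z.of_nat k)))
           (Cmult (V (n + Z.of_nat k + 1)%Z) (u (- Z.of_nat k - 1)%Z))) c.

Definition D2m (m : nat) (u : fseries) : fseries :=
  fun n => Cmult (RtoC ((IZR n * PI) ^ (2 * m))) (u n).

Definition dom_S (p : bool) (m : nat) (V u : fseries) : Prop :=
  H p (INR m) u /\
  exists g : fseries,
    (forall n : Z, prod_coef V u n (g n)) /\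
    H p 0 (fun n => Cplus (D2m m u n) (g n)).

From Stdlib Require Import Reals ZArith Lra Lia Psatz.
From Coquelicot Require Import Coquelicot.
Open Scope R_scope.

(* Write s = m alpha <= m.  For m >= 1 the coefficients of u are summable, and the
   Peetre-type splitting <n>^-s <= 3^m <n-j>^-s + 2^m <n>^-m <n-j>^-s <j>^m cuts the
   convolution V u into an l^2 * l^1 part and a part of size <n>^-m, so V u lies in
   H^-s.  Then D^2m u = h - V u with h in L_2, and <n> <= |n pi| for n <> 0 gives
   <n>^(2m-s) |u_n| <= |h_n| + <n>^-s |(V u)_n|, i.e. u lies in H^(2m-s).  For m = 0
   the claim is the hypothesis u in H^0. *)

Fixpoint zsum (a : Z -> R) (lo : Z) (len : nat) : R :=
  match len with O => 0 | S l => a lo + zsum a (lo + 1)%Z l end.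

Lemma zsum_ext a b lo l : (forall n, a n = b n) -> zsum a lo l = zsum b lo l.
Proof. intros Hab; revert lo; induction l; intros lo; simpl; rewrite ?Hab, ?IHl; auto. Qed.

Lemma zsum_le a b lo l : (forall n, a n <= b n) -> zsum a lo l <= zsum b lo l.
Proof.
  intros Hab; revert lo; induction l; intros lo; simpl; [lra|].
  apply Rplus_le_compat; auto.
Qed.

Lemma zsum_nonneg a lo l : (forall n, 0 <= a n) -> 0 <= zsum a lo l.
Proof.
  intros Ha; revert lo; induction l; intros lo; simpl; [lra|].
  apply Rplus_le_le_0_compat; auto.
Qed.

Lemma zsum_plus a b lo l : zsum (fun n => a n + b n) lo l = zsum a lo l + zsum b lo l.
Proof. revert lo; induction l; intros lo; simpl; [lra|]. rewrite IHl; lra. Qed.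

Lemma zsum_scal c a lo l : zsum (fun n => c * a n) lo l = c * zsum a lo l.
Proof. revert lo; induction l; intros lo; simpl; [lra|]. rewrite IHl; lra. Qed.

Lemma zsum_mult a b lo l lo' l' :
  zsum a lo l * zsum b lo' l' = zsum (fun i => zsum (fun j => a i * b j) lo' l') lo l.
Proof.
  rewrite Rmult_comm, <- zsum_scal. apply zsum_ext; intros i.
  rewrite Rmult_comm, <- zsum_scal. reflexivity.
Qed.

Lemma zsum_app a lo l1 l2 :
  zsum a lo (l1 + l2) = zsum a lo l1 + zsum a (lo + Z.of_nat l1) l2.
Proof.
  revert lo; induction l1; intros lo; simpl.
  - rewrite Z.add_0_r. lra.
  - rewrite IHl1, Rplus_assoc. do 3 f_equal. lia.
Qed.

Lemma zsum_last a lo l : zsum a lo (S l) = zsum a lo l + a (lo + Z.of_nat l)%Z.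
Proof. rewrite <- Nat.add_1_r, zsum_app. simpl. lra. Qed.

Lemma zsum_shift a c lo l : zsum (fun n => a (n + c)%Z) lo l = zsum a (lo + c) l.
Proof. revert lo; induction l; intros lo; cbn [zsum]; [lra|]. rewrite IHl. do 2 f_equal. lia. Qed.

Lemma zsum_reflect a c lo l :
  zsum (fun j => a (c - j)%Z) lo l = zsum a (c - (lo + Z.of_nat l) + 1) l.
Proof.
  revert lo; induction l; intros lo; [reflexivity|].
  rewrite (zsum_last a). cbn [zsum]. rewrite IHl, Rplus_comm.
  f_equal; f_equal; lia.
Qed.

Lemma zsum_comm (f : Z -> Z -> R) lo1 l1 lo2 l2 :
  zsum (fun i => zsum (fun j => f i j) lo2 l2) lo1 l1
  = zsum (fun j => zsum (fun i => f i j) lo1 l1) lo2 l2.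
Proof.
  revert lo1; induction l1; intros lo1; simpl.
  - clear. revert lo2; induction l2; intros; simpl; auto. rewrite <- IHl2; lra.
  - rewrite IHl1, <- zsum_plus. reflexivity.
Qed.

Lemma zsum_le_window a lo l lo' l' : (forall n, 0 <= a n) ->
  (lo' <= lo)%Z -> (lo + Z.of_nat l <= lo' + Z.of_nat l')%Z ->
  zsum a lo l <= zsum a lo' l'.
Proof.
  intros Ha H1 H2.
  set (d1 := Z.to_nat (lo - lo')). set (d2 := (l' - d1 - l)%nat).
  replace l' with (d1 + (l + d2))%nat by (unfold d2, d1; lia).
  rewrite !zsum_app.
  replace (lo' + Z.of_nat d1)%Z with lo by (unfold d1; lia).
  pose proof (zsum_nonneg a lo' d1 Ha). pose proof (zsum_nonneg a (lo + Z.of_nat l) d2 Ha).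
  lra.
Qed.

Lemma sum_n_zsum a N :
  sum_n (fun k => a (Z.of_nat k) + a (- Z.of_nat k - 1)%Z) N = zsum a (- Z.of_nat N - 1) (2 * N + 2).
Proof.
  induction N.
  - rewrite sum_O. simpl. lra.
  - rewrite sum_Sn, IHN. change (plus ?x ?y) with (x + y).
    replace (2 * S N + 2)%nat with (S (S (2 * N + 2))) by lia.
    rewrite zsum_last. cbn [zsum].
    replace (- Z.of_nat (S N) - 1 + 1)%Z with (- Z.of_nat N - 1)%Z by lia.
    replace (- Z.of_nat (S N) - 1 + Z.of_nat (S (2 * N + 2)))%Z with (Z.of_nat (S N)) by lia.
    lra.
Qed.

Lemma is_lim_seq_zsum (f : nat -> Z -> R) (F : Z -> R) lo l :
  (forall n, is_lim_seq (fun J => f J n) (F n)) ->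
  is_lim_seq (fun J => zsum (f J) lo l) (zsum F lo l).
Proof.
  intros Hf; revert lo; induction l; intros lo; simpl.
  - apply is_lim_seq_const.
  - apply is_lim_seq_plus'; auto.
Qed.

Lemma zsum_AM_GM x y lo l :
  zsum (fun j => x j * y j) lo l <= (zsum (fun j => x j ^ 2) lo l + zsum (fun j => y j ^ 2) lo l) / 2.
Proof.
  unfold Rdiv. rewrite Rmult_comm, <- zsum_plus, <- zsum_scal. apply zsum_le.
  intros n. pose proof (pow2_ge_0 (x n - y n)). nra.
Qed.

(* [2 (W P - S^2)] is the double sum of [w_i w_j (x_i - x_j)^2]. *)
Lemma zsum_Cauchy_Schwarz x w lo l : (forall n, 0 <= w n) ->
  zsum (fun j => x j * w j) lo l ^ 2 <= zsum w lo l * zsum (fun j => x j ^ 2 * w j) lo l.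
Proof.
  intros Hw.
  assert (HD : 0 <= zsum (fun i => zsum (fun j => w i * w j * (x i - x j) ^ 2) lo l) lo l).
  { apply zsum_nonneg; intros i; apply zsum_nonneg; intros j.
    pose proof (Hw i); pose proof (Hw j); pose proof (pow2_ge_0 (x i - x j)).
    apply Rmult_le_pos; [apply Rmult_le_pos|]; auto. }
  rewrite (zsum_ext _ (fun i => zsum (fun j => x i ^ 2 * w i * w j) lo l
                               + zsum (fun j => w i * (x j ^ 2 * w j)) lo l
                               + -2 * zsum (fun j => x i * w i * (x j * w j)) lo l)) in HD.
  2: { intros i. rewrite <- zsum_scal, <- !zsum_plus. apply zsum_ext; intros j; ring. }
  rewrite !zsum_plus, zsum_scal, <- !zsum_mult in HD. nra.
Qed.

Lemma sum_n_pairs_incr a N : (forall n, 0 <= a n) ->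
  sum_n (fun k => a (Z.of_nat k) + a (- Z.of_nat k - 1)%Z) N
  <= sum_n (fun k => a (Z.of_nat k) + a (- Z.of_nat k - 1)%Z) (S N).
Proof.
  intros Ha. rewrite sum_Sn. change (plus ?x ?y) with (x + y).
  pose proof (Ha (Z.of_nat (S N))). pose proof (Ha (- Z.of_nat (S N) - 1)%Z). lra.
Qed.

Lemma sumZ_finite_zsum_bounded a : (forall n, 0 <= a n) -> sumZ_finite a ->
  exists C, forall lo l, zsum a lo l <= C.
Proof.
  intros Ha [C HC]. exists C. intros lo l.
  set (N := (Z.abs_nat lo + l)%nat).
  apply Rle_trans with (zsum a (- Z.of_nat N - 1) (2 * N + 2)).
  { apply zsum_le_window; auto; unfold N; lia. }
  rewrite <- sum_n_zsum. apply is_lim_seq_incr_compare; auto.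
  intros n. apply sum_n_pairs_incr, Ha.
Qed.

Lemma sumZ_finite_of_zsum_bounded a C : (forall n, 0 <= a n) ->
  (forall N, zsum a (- Z.of_nat N - 1) (2 * N + 2) <= C) -> sumZ_finite a.
Proof.
  intros Ha HC.
  destruct (ex_finite_lim_seq_incr (sum_n (fun k => a (Z.of_nat k) + a (- Z.of_nat k - 1)%Z)) C)
    as [l Hl].
  - intros n. apply sum_n_pairs_incr, Ha.
  - intros n. rewrite sum_n_zsum. apply HC.
  - exists l. exact Hl.
Qed.

Lemma sumZ_finite_ext a b : (forall n, a n = b n) -> sumZ_finite a -> sumZ_finite b.
Proof. intros E Ha. eapply ex_series_ext; [|exact Ha]. intros k; simpl; rewrite !E; reflexivity. Qed.

Lemma sumZ_finite_le a b : (forall n, 0 <= a n <= b n) -> sumZ_finite b -> sumZ_finite a.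
Proof.
  intros E Hb. apply (@ex_series_le R_AbsRing R_CompleteNormedModule _
    (fun k => b (Z.of_nat k) + b (- Z.of_nat k - 1)%Z)); [|exact Hb].
  intros k. change (norm ?x) with (Rabs x).
  pose proof (E (Z.of_nat k)). pose proof (E (- Z.of_nat k - 1)%Z).
  rewrite Rabs_pos_eq; lra.
Qed.

Lemma sumZ_finite_plus a b : sumZ_finite a -> sumZ_finite b -> sumZ_finite (fun n => a n + b n).
Proof.
  intros Ha Hb. eapply ex_series_ext; [|exact (ex_series_plus _ _ Ha Hb)].
  intros k. change (plus ?x ?y) with (x + y). lra.
Qed.

Lemma sumZ_finite_scal c a : sumZ_finite a -> sumZ_finite (fun n => c * a n).
Proof.
  intros Ha. eapply ex_series_ext; [|exact (ex_series_scal c _ Ha)].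
  intros k. change (scal ?x ?y) with (x * y). lra.
Qed.

Lemma sum_n_inv_sq_le N : sum_n (fun k => / (INR k + 1) ^ 2) N <= 2 - / (INR N + 1).
Proof.
  induction N.
  - rewrite sum_O. simpl. lra.
  - rewrite sum_Sn. change (plus ?x ?y) with (x + y). rewrite S_INR.
    assert (Hstep : / (INR N + 1 + 1) ^ 2 <= / (INR N + 1) - / (INR N + 1 + 1)).
    { pose proof (pos_INR N). replace (/ (INR N + 1) - / (INR N + 1 + 1))
        with (/ ((INR N + 1) * (INR N + 1 + 1))) by (field; lra).
      apply Rinv_le_contravar; nra. }
    lra.
Qed.

Lemma jb_ge1 n : 1 <= jb n.
Proof. unfold jb. pose proof (Rabs_pos (IZR n)). lra. Qed.

Lemma jb_pos n : 0 < jb n.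
Proof. pose proof (jb_ge1 n). lra. Qed.

Lemma jb_sub_le n j : jb (n - j) <= jb n + jb j.
Proof.
  unfold jb. rewrite minus_IZR. pose proof (Rabs_triang (IZR n) (- IZR j)) as T.
  rewrite Rabs_Ropp in T. unfold Rminus. lra.
Qed.

Lemma jb_le_Rabs_mult_PI n : n <> 0%Z -> jb n <= Rabs (IZR n * PI).
Proof.
  intros Hn. unfold jb. pose proof PI2_1.
  assert (1 <= Rabs (IZR n)) by (rewrite <- abs_IZR; apply (IZR_le 1); lia).
  rewrite Rabs_mult, (Rabs_pos_eq PI) by lra. nra.
Qed.

Lemma sumZ_finite_inv_jb_sq : sumZ_finite (fun n => / jb n ^ 2).
Proof.
  apply (sumZ_finite_of_zsum_bounded _ 4).
  - intros n. apply Rlt_le, Rinv_0_lt_compat, pow_lt, jb_pos.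
  - intros N. rewrite <- sum_n_zsum.
    eapply Rle_trans with (sum_n (fun k => 2 * / (INR k + 1) ^ 2) N).
    { apply sum_n_m_le. intros k. unfold jb.
      rewrite <- INR_IZR_INZ, minus_IZR, opp_IZR, <- INR_IZR_INZ.
      pose proof (pos_INR k).
      rewrite Rabs_pos_eq, Rabs_left by lra.
      replace (1 + - (- INR k - 1)) with (INR k + 1 + 1) by ring.
      assert (/ (INR k + 1 + 1) ^ 2 <= / (INR k + 1) ^ 2) by (apply Rinv_le_contravar; nra).
      replace (1 + INR k) with (INR k + 1) by ring. lra. }
    rewrite (sum_n_scal_l 2 (fun k => / (INR k + 1) ^ 2)). change (scal ?x ?y) with (x * y).
    pose proof (pos_INR N). assert (0 < / (INR N + 1)) by (apply Rinv_0_lt_compat; lra).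
    apply Rle_trans with (2 * (2 - / (INR N + 1))); [|lra].
    apply Rmult_le_compat_l; [lra | apply sum_n_inv_sq_le].
Qed.

Lemma Rpower_1_l x : Rpower 1 x = 1.
Proof. unfold Rpower. rewrite ln_1, Rmult_0_r. apply exp_0. Qed.

Lemma Rpower_double x s : Rpower x (2 * s) = Rpower x s ^ 2.
Proof. replace (2 * s) with (s + s) by ring. rewrite Rpower_plus. ring. Qed.

Lemma Rpower_nonneg x s : 0 <= Rpower x s.
Proof. apply Rlt_le, exp_pos. Qed.

Lemma H_weighted_sq p s f :
  H p s f <-> parity_ok p f /\ sumZ_finite (fun n => (Rpower (jb n) s * Cmod (f n)) ^ 2).
Proof.
  unfold H. split; intros [Hp Hf]; split; auto;
    (eapply sumZ_finite_ext; [|exact Hf]); intros n; cbv beta; rewrite Rpower_double; ring.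
Qed.

Lemma Rpower_jb_neg_le1 s n : 0 <= s -> Rpower (jb n) (- s) <= 1.
Proof.
  intros Hs. rewrite <- (Rpower_O (jb n)) by apply jb_pos.
  apply Rle_Rpower; [apply jb_ge1 | lra].
Qed.

Lemma Rpower_jb_neg_sq_le M n : 1 <= M -> Rpower (jb n) (- M) ^ 2 <= / jb n ^ 2.
Proof.
  intros HM. rewrite <- pow_inv.
  apply pow_incr. split; [apply Rpower_nonneg|].
  replace (/ jb n) with (Rpower (jb n) (- (1))) by (rewrite Rpower_Ropp, Rpower_1; auto using jb_pos).
  apply Rle_Rpower; [apply jb_ge1 | lra].
Qed.

Lemma exp_le x y : x <= y -> exp x <= exp y.
Proof. intros [Hlt|Heq]; [apply Rlt_le, exp_increasing, Hlt | rewrite Heq; apply Rle_refl]. Qed.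

(* Used with a = <n>, b = <n-j>, c = <j>: either b <= 3a, or else a <= c and b <= 2c. *)
Lemma Rpower_weight_split M s a b c :
  0 <= s <= M -> 1 <= a -> 1 <= b -> 1 <= c -> b <= a + c ->
  Rpower a (- s)
  <= Rpower 3 M * Rpower b (- s) + Rpower 2 M * Rpower a (- M) * Rpower b (- s) * Rpower c M.
Proof.
  intros Hs Ha Hb Hc Hbac. unfold Rpower.
  assert (Hln : forall x, 1 <= x -> 0 <= ln x) by (intros x Hx; rewrite <- ln_1; apply ln_le; lra).
  pose proof (Hln 2 ltac:(lra)). pose proof (Hln 3 ltac:(lra)).
  pose proof (Hln a Ha). pose proof (Hln b Hb). pose proof (Hln c Hc).
  rewrite <- !exp_plus.
  pose proof (exp_pos (M * ln 3 + - s * ln b)).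
  pose proof (exp_pos (M * ln 2 + - M * ln a + - s * ln b + M * ln c)).
  destruct (Rle_or_lt b (3 * a)) as [Hb3|Hb3].
  - assert (ln b <= ln 3 + ln a) by (rewrite <- ln_mult by lra; apply ln_le; lra).
    enough (exp (- s * ln a) <= exp (M * ln 3 + - s * ln b)) by lra.
    apply exp_le. nra.
  - assert (ln b <= ln 2 + ln c) by (rewrite <- ln_mult by lra; apply ln_le; lra).
    assert (ln a <= ln c) by (apply ln_le; lra).
    enough (exp (- s * ln a) <= exp (M * ln 2 + - M * ln a + - s * ln b + M * ln c)) by lra.
    apply exp_le. nra.
Qed.

Definition prod_term (V u : fseries) (n : Z) (k : nat) : C :=
  Cplus (Cmult (V (n - Z.of_nat k)%Z) (u (Z.of_nat k)))
        (Cmult (V (n + Z.of_nat k + 1)%Z) (u (- Z.of_nat k - 1)%Z)).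

Lemma Cmod_sum_n_le (f : nat -> C) J : Cmod (sum_n f J) <= sum_n (fun k => Cmod (f k)) J.
Proof.
  induction J.
  - rewrite !sum_O. lra.
  - rewrite !sum_Sn. eapply Rle_trans; [apply Cmod_triangle|].
    apply Rplus_le_compat; [exact IHJ | apply Rle_refl].
Qed.

Lemma Cmod_sum_prod_term_le V u n J :
  Cmod (sum_n (prod_term V u n) J)
  <= zsum (fun j => Cmod (V (n - j)%Z) * Cmod (u j)) (- Z.of_nat J - 1) (2 * J + 2).
Proof.
  eapply Rle_trans; [apply Cmod_sum_n_le|]. rewrite <- sum_n_zsum.
  apply sum_n_m_le. intros k. unfold prod_term.
  eapply Rle_trans; [apply Cmod_triangle|]. rewrite !Cmod_mult.
  replace (n - (- Z.of_nat k - 1))%Z with (n + Z.of_nat k + 1)%Z by lia. lra.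
Qed.

Lemma is_lim_seq_Cmod_series (f : nat -> C) c :
  is_series f c -> is_lim_seq (fun J => Cmod (sum_n f J)) (Cmod c).
Proof. intros Hf. exact (filterlim_comp _ _ _ (sum_n f) norm _ _ _ Hf (filterlim_norm c)). Qed.

Section WeightedProduct.

Variables (M s A2 B2 Z2 : R) (V u : fseries).
Hypothesis Hs : 0 <= s <= M.

Let w n := Rpower (jb n) (- s).
Let e n := Rpower (jb n) (- M).
Let A k := w k * Cmod (V k).
Let B j := Rpower (jb j) M * Cmod (u j).

Hypothesis HA : forall lo l, zsum (fun k => A k ^ 2) lo l <= A2.
Hypothesis HB : forall lo l, zsum (fun j => B j ^ 2) lo l <= B2.
Hypothesis HZ : forall lo l, zsum (fun j => e j ^ 2) lo l <= Z2.

Let U1 := (Z2 + B2) / 2.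
Let Yb := (A2 + B2) / 2.

Lemma A_nonneg k : 0 <= A k.
Proof. apply Rmult_le_pos; [apply Rpower_nonneg | apply Cmod_ge_0]. Qed.

Lemma B_nonneg k : 0 <= B k.
Proof. apply Rmult_le_pos; [apply Rpower_nonneg | apply Cmod_ge_0]. Qed.

Lemma zsum_Cmod_le lo l : zsum (fun j => Cmod (u j)) lo l <= U1.
Proof.
  rewrite (zsum_ext _ (fun j => e j * B j)).
  2: { intros j. unfold e, B. rewrite <- Rmult_assoc, <- Rpower_plus.
       replace (- M + M) with 0 by ring. rewrite Rpower_O by apply jb_pos. ring. }
  eapply Rle_trans; [apply zsum_AM_GM|]. pose proof (HZ lo l). pose proof (HB lo l).
  unfold U1. lra.
Qed.

Lemma weighted_conv_le n lo l :
  w n * zsum (fun j => Cmod (V (n - j)%Z) * Cmod (u j)) lo l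
  <= Rpower 3 M * zsum (fun j => A (n - j)%Z * Cmod (u j)) lo l
     + Rpower 2 M * e n * zsum (fun j => A (n - j)%Z * B j) lo l.
Proof.
  rewrite <- !zsum_scal, <- zsum_plus. apply zsum_le. intros j.
  assert (Hsplit := Rpower_weight_split M s (jb n) (jb (n - j)) (jb j) Hs
                      (jb_ge1 n) (jb_ge1 (n - j)) (jb_ge1 j) (jb_sub_le n j)).
  pose proof (Cmod_ge_0 (V (n - j)%Z)). pose proof (Cmod_ge_0 (u j)).
  unfold A, B, w, e.
  apply Rle_trans with ((Rpower 3 M * Rpower (jb (n - j)) (- s)
    + Rpower 2 M * Rpower (jb n) (- M) * Rpower (jb (n - j)) (- s) * Rpower (jb j) M)
    * (Cmod (V (n - j)%Z) * Cmod (u j))).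
  - apply Rmult_le_compat_r; [apply Rmult_le_pos|]; auto.
  - apply Req_le. ring.
Qed.

Lemma zsum_conv_Cmod_sq_le n lo l :
  zsum (fun j => A (n - j)%Z * Cmod (u j)) lo l ^ 2
  <= U1 * zsum (fun j => A (n - j)%Z ^ 2 * Cmod (u j)) lo l.
Proof.
  eapply Rle_trans; [apply (zsum_Cauchy_Schwarz (fun j => A (n - j)%Z)); intros; apply Cmod_ge_0|].
  apply Rmult_le_compat_r; [|apply zsum_Cmod_le].
  apply zsum_nonneg. intros j. apply Rmult_le_pos; [apply pow2_ge_0 | apply Cmod_ge_0].
Qed.

Lemma zsum_conv_B_le n lo l : zsum (fun j => A (n - j)%Z * B j) lo l <= Yb.
Proof.
  eapply Rle_trans; [apply zsum_AM_GM|].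
  cbv beta. rewrite (zsum_reflect (fun k => A k ^ 2)). pose proof (HA (n - (lo + Z.of_nat l) + 1)%Z l).
  pose proof (HB lo l). unfold Yb. lra.
Qed.

Lemma zsum_zsum_conv_sq_le lo l jlo jl :
  zsum (fun n => zsum (fun j => A (n - j)%Z ^ 2 * Cmod (u j)) jlo jl) lo l <= A2 * U1.
Proof.
  rewrite (zsum_comm (fun n j => A (n - j)%Z ^ 2 * Cmod (u j))).
  apply Rle_trans with (zsum (fun j => A2 * Cmod (u j)) jlo jl).
  - apply zsum_le. intros j.
    rewrite (zsum_ext _ (fun n => Cmod (u j) * A (n + - j)%Z ^ 2))
      by (intros k; rewrite Z.add_opp_r; ring).
    rewrite zsum_scal, (zsum_shift (fun k => A k ^ 2)), Rmult_comm.
    apply Rmult_le_compat_r; [apply Cmod_ge_0 | apply HA].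
  - rewrite zsum_scal. apply Rmult_le_compat_l; [|apply zsum_Cmod_le].
    pose proof (HA 0%Z 0%nat). simpl in *. lra.
Qed.

Lemma weighted_conv_sq_le n lo l :
  (w n * zsum (fun j => Cmod (V (n - j)%Z) * Cmod (u j)) lo l) ^ 2
  <= 2 * Rpower 3 M ^ 2 * U1 * zsum (fun j => A (n - j)%Z ^ 2 * Cmod (u j)) lo l
     + 2 * Rpower 2 M ^ 2 * Yb ^ 2 * e n ^ 2.
Proof.
  set (x := zsum (fun j => A (n - j)%Z * Cmod (u j)) lo l).
  set (y := zsum (fun j => A (n - j)%Z * B j) lo l).
  assert (Hx : x ^ 2 <= U1 * zsum (fun j => A (n - j)%Z ^ 2 * Cmod (u j)) lo l)
    by apply zsum_conv_Cmod_sq_le.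
  assert (Hy : 0 <= y <= Yb).
  { split; [|apply zsum_conv_B_le]. apply zsum_nonneg. intros j.
    apply Rmult_le_pos; [apply A_nonneg | apply B_nonneg]. }
  assert (Hp : 0 <= w n * zsum (fun j => Cmod (V (n - j)%Z) * Cmod (u j)) lo l).
  { apply Rmult_le_pos; [apply Rpower_nonneg|]. apply zsum_nonneg. intros j.
    apply Rmult_le_pos; apply Cmod_ge_0. }
  pose proof (weighted_conv_le n lo l) as Hc. fold x y in Hc.
  set (c3 := Rpower 3 M) in *. set (c2e := Rpower 2 M * e n) in *.
  apply Rle_trans with (2 * (c3 * x) ^ 2 + 2 * (c2e * y) ^ 2).
  - apply Rle_trans with ((c3 * x + c2e * y) ^ 2).
    + apply pow_incr. lra.
    + pose proof (pow2_ge_0 (c3 * x - c2e * y)). nra.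
  - assert (y ^ 2 <= Yb ^ 2) by (apply pow_incr; lra).
    assert (0 <= c2e ^ 2) by apply pow2_ge_0. assert (0 <= c3 ^ 2) by apply pow2_ge_0.
    unfold c2e in *. rewrite !Rpow_mult_distr in *.
    assert (0 <= e n ^ 2) by apply pow2_ge_0. nra.
Qed.

Lemma zsum_weighted_prod_coef_le g : (forall n, prod_coef V u n (g n)) -> forall lo l,
  zsum (fun n => (w n * Cmod (g n)) ^ 2) lo l
  <= 2 * Rpower 3 M ^ 2 * U1 * (A2 * U1) + 2 * Rpower 2 M ^ 2 * Yb ^ 2 * Z2.
Proof.
  intros Hg lo l.
  set (P := fun J n => w n * Cmod (sum_n (prod_term V u n) J)).
  set (CG := 2 * Rpower 3 M ^ 2 * U1 * (A2 * U1) + 2 * Rpower 2 M ^ 2 * Yb ^ 2 * Z2).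
  assert (Hbound : forall J, zsum (fun n => P J n ^ 2) lo l <= CG).
  { intros J. set (jlo := (- Z.of_nat J - 1)%Z). set (jl := (2 * J + 2)%nat).
    apply Rle_trans with (zsum (fun n =>
        2 * Rpower 3 M ^ 2 * U1 * zsum (fun j => A (n - j)%Z ^ 2 * Cmod (u j)) jlo jl
        + 2 * Rpower 2 M ^ 2 * Yb ^ 2 * e n ^ 2) lo l).
    - apply zsum_le. intros n. eapply Rle_trans; [|apply weighted_conv_sq_le].
      apply pow_incr. split.
      + apply Rmult_le_pos; [apply Rpower_nonneg | apply Cmod_ge_0].
      + apply Rmult_le_compat_l; [apply Rpower_nonneg | apply Cmod_sum_prod_term_le].
    - rewrite zsum_plus, !zsum_scal.
      assert (0 <= U1) by (pose proof (zsum_Cmod_le 0%Z 0%nat); simpl in *; lra).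
      pose proof (pow2_ge_0 (Rpower 3 M)). pose proof (pow2_ge_0 (Rpower 2 M)).
      pose proof (pow2_ge_0 Yb).
      apply Rplus_le_compat; apply Rmult_le_compat_l; auto using zsum_zsum_conv_sq_le; nra. }
  assert (Hlim : is_lim_seq (fun J => zsum (fun n => P J n ^ 2) lo l)
                   (zsum (fun n => (w n * Cmod (g n)) ^ 2) lo l)).
  { apply is_lim_seq_zsum. intros n.
    assert (Hw : is_lim_seq (fun J => P J n) (w n * Cmod (g n)))
      by exact (is_lim_seq_scal_l _ (w n) _ (is_lim_seq_Cmod_series _ _ (Hg n))).
    apply (is_lim_seq_ext (fun J => P J n * P J n)); [intros; ring|].
    replace ((w n * Cmod (g n)) ^ 2) with ((w n * Cmod (g n)) * (w n * Cmod (g n))) by ring.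
    apply is_lim_seq_mult'; exact Hw. }
  exact (is_lim_seq_le _ _ _ CG Hbound Hlim (is_lim_seq_const CG)).
Qed.

End WeightedProduct.

Lemma prod_coef_weighted_l2 M s V u g : 1 <= M -> 0 <= s <= M ->
  sumZ_finite (fun k => (Rpower (jb k) (- s) * Cmod (V k)) ^ 2) ->
  sumZ_finite (fun j => (Rpower (jb j) M * Cmod (u j)) ^ 2) ->
  (forall n, prod_coef V u n (g n)) ->
  sumZ_finite (fun n => (Rpower (jb n) (- s) * Cmod (g n)) ^ 2).
Proof.
  intros HM Hs HV Hu Hg.
  destruct (sumZ_finite_zsum_bounded _ (fun k => pow2_ge_0 _) HV) as [A2 HA].
  destruct (sumZ_finite_zsum_bounded _ (fun j => pow2_ge_0 _) Hu) as [B2 HB].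
  assert (HZ : sumZ_finite (fun j => Rpower (jb j) (- M) ^ 2)).
  { apply (sumZ_finite_le _ (fun j => / jb j ^ 2)); [|apply sumZ_finite_inv_jb_sq].
    intros j. split; [apply pow2_ge_0 | apply Rpower_jb_neg_sq_le, HM]. }
  destruct (sumZ_finite_zsum_bounded _ (fun j => pow2_ge_0 _) HZ) as [Z2 HZ2].
  eapply (sumZ_finite_of_zsum_bounded _ _ (fun n => pow2_ge_0 _)). intros N.
  exact (zsum_weighted_prod_coef_le M s A2 B2 Z2 V u Hs HA HB HZ2 g Hg _ _).
Qed.

Lemma Cmod_D2m m u n : Cmod (D2m m u n) = Rabs ((IZR n * PI) ^ (2 * m)) * Cmod (u n).
Proof. unfold D2m. rewrite Cmod_mult, Cmod_R. reflexivity. Qed.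

Lemma jb_pow_le_D2m_symbol m n : n <> 0%Z -> jb n ^ (2 * m) <= Rabs ((IZR n * PI) ^ (2 * m)).
Proof.
  intros Hn. rewrite <- RPow_abs. apply pow_incr.
  split; [apply Rlt_le, jb_pos | apply jb_le_Rabs_mult_PI, Hn].
Qed.

Lemma D2m_regularity m s u g n : 0 <= s ->
  Rpower (jb n) (2 * INR m - s) * Cmod (u n)
  <= Cmod (D2m m u n + g n) + Rpower (jb n) (- s) * Cmod (g n)
     + Rpower (jb n) (INR m) * Cmod (u n).
Proof.
  intros Hs.
  pose proof (Cmod_ge_0 (D2m m u n + g n)). pose proof (Cmod_ge_0 (g n)).
  pose proof (Cmod_ge_0 (u n)). pose proof (Rpower_nonneg (jb n) (- s)).
  destruct (Z.eq_dec n 0) as [->|Hn].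
  - replace (jb 0) with 1 by (unfold jb; rewrite Rabs_R0; ring).
    rewrite !Rpower_1_l. lra.
  - assert (Hw : Rpower (jb n) (2 * INR m - s) = Rpower (jb n) (- s) * jb n ^ (2 * m)).
    { rewrite <- Rpower_pow, <- Rpower_plus, mult_INR by apply jb_pos. f_equal. simpl. ring. }
    assert (HD : jb n ^ (2 * m) * Cmod (u n) <= Cmod (D2m m u n + g n) + Cmod (g n)).
    { apply Rle_trans with (Cmod (D2m m u n)).
      - rewrite Cmod_D2m. apply Rmult_le_compat_r; [lra | apply jb_pow_le_D2m_symbol, Hn].
      - replace (D2m m u n) with (D2m m u n + g n + - g n)%C at 1 by ring.
        rewrite <- (Cmod_opp (g n)). apply Cmod_triangle. }
    pose proof (Rpower_jb_neg_le1 s n Hs).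
    pose proof (Rpower_nonneg (jb n) (INR m)).
    rewrite Hw, Rmult_assoc.
    apply Rle_trans with (Rpower (jb n) (- s) * (Cmod (D2m m u n + g n) + Cmod (g n)));
      [apply Rmult_le_compat_l; lra | nra].
Qed.

Lemma pow2_le_3_sum t a b c : 0 <= t -> t <= a + b + c -> t ^ 2 <= 3 * (a ^ 2 + b ^ 2 + c ^ 2).
Proof.
  intros Ht Habc. apply Rle_trans with ((a + b + c) ^ 2).
  - apply pow_incr. lra.
  - pose proof (pow2_ge_0 (a - b)). pose proof (pow2_ge_0 (b - c)).
    pose proof (pow2_ge_0 (a - c)). nra.
Qed.

Theorem theorem2 (p : bool) (m : nat) (alpha : R)
  (halpha : 0 <= alpha <= 1) (V : fseries)
  (hV : H true (- (INR m * alpha)) V) (u : fseries)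
  (hu : dom_S p m V u) :
  H p (INR m * (2 - alpha)) u.
Proof.
  destruct hu as [Hum [g [Hg Hh]]].
  destruct (Nat.eq_dec m 0) as [->|Hm].
  { replace (INR 0 * (2 - alpha)) with (INR 0) by (simpl; ring). exact Hum. }
  set (s := INR m * alpha) in *.
  assert (HM : 1 <= INR m) by (apply (le_INR 1); lia).
  assert (Hs : 0 <= s <= INR m) by (unfold s; split; nra).
  apply H_weighted_sq in Hum as [Hpar Hu].
  apply H_weighted_sq in hV as [_ HV].
  apply H_weighted_sq in Hh as [_ HL2].
  pose proof (prod_coef_weighted_l2 (INR m) s V u g HM Hs HV Hu Hg) as HgW.
  apply H_weighted_sq. split; [exact Hpar|].
  replace (INR m * (2 - alpha)) with (2 * INR m - s) by (unfold s; ring).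
  apply (sumZ_finite_le _ (fun n => 3 * ((Rpower (jb n) 0 * Cmod (D2m m u n + g n)) ^ 2
           + (Rpower (jb n) (- s) * Cmod (g n)) ^ 2 + (Rpower (jb n) (INR m) * Cmod (u n)) ^ 2))).
  - intros n. split; [apply pow2_ge_0|]. rewrite Rpower_O, Rmult_1_l by apply jb_pos.
    apply pow2_le_3_sum; [apply Rmult_le_pos; [apply Rpower_nonneg | apply Cmod_ge_0]|].
    apply D2m_regularity. lra.
  - apply sumZ_finite_scal, sumZ_finite_plus; [apply sumZ_finite_plus|]; assumption.
Qed.
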